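(* Let $n\ge 2$, let $F$ be the free group of rank $n$ and $F^{(2)}$ its second derived subgroup. Let $K$ be a field of characteristic $0$ whose transcendence degree over $\mathbb{Q}$ is at least $n$. Then there is a group embedding $F/F^{(2)}\hookrightarrow ST(K)\subset \mathrm{SL}(2,K)$.
   Context: $F^{(2)}$ is the derived subgroup of $F^{(1)}=[F,F]$. $ST(K)$ denotes the group of matrices $\begin{bmatrix} a&0\\ b&a^{-1}\end{bmatrix}$ with $a\in K^*$, $b\in K$. *)

From HB Require Import structures.
From mathcomp Require Import all_boot all_order all_algebra.
From mathcomp Require Import mpoly.
Set Implicit Arguments. Unset Strict Implicit. Unset Printing Implicit Defensive.
Import GRing.Theory.
Local Open Scope ring_scope.

(* A letter is (i, b): generator x_i if b = false, its inverse x_i^-1 if b = true. *)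
Definition letter (n : nat) := ('I_n * bool)%type.
Definition word (n : nat) := seq (letter n).

Definition flip_letter n (a : letter n) : letter n := (a.1, ~~ a.2).
Definition winv n (w : word n) : word n := rev (map (@flip_letter n) w).
Definition wcomm n (u v : word n) : word n := winv u ++ winv v ++ u ++ v.

Inductive freeq n : word n -> word n -> Prop :=
| freeq_refl w : freeq w w
| freeq_sym w w' : freeq w w' -> freeq w' w
| freeq_trans w1 w2 w3 : freeq w1 w2 -> freeq w2 w3 -> freeq w1 w3
| freeq_cancel (u v : word n) (a : letter n) :
    freeq (u ++ [:: a; flip_letter a] ++ v) (u ++ v).

Inductive gen_sub n (S : word n -> Prop) : word n -> Prop :=
| gen_sub_base w : S w -> gen_sub S w
| gen_sub_nil : gen_sub S [::]
| gen_sub_cat u v : gen_sub S u -> gen_sub S v -> gen_sub S (u ++ v)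
| gen_sub_inv u : gen_sub S u -> gen_sub S (winv u)
| gen_sub_freeq u v : freeq u v -> gen_sub S u -> gen_sub S v.

Definition derived_sub n (H : word n -> Prop) : word n -> Prop :=
  gen_sub (fun w => exists u v, [/\ H u, H v & w = wcomm u v]).

Definition F1 n : word n -> Prop := derived_sub (fun _ : word n => True).
Definition F2 n : word n -> Prop := derived_sub (@F1 n).

Definition weval (K : fieldType) n (g : 'I_n -> 'M[K]_2) (w : word n) : 'M[K]_2 :=
  foldr (fun a m => (if a.2 then (g a.1)^-1 else g a.1) * m) 1 w.

Definition in_ST (K : fieldType) (M : 'M[K]_2) : Prop :=
  exists (a b : K), a != 0 /\
    M = \matrix_(i < 2, j < 2)
          (if (i == 0) && (j == 0) then a
           else if (i == 0) then 0
           else if (j == 0) then b else a^-1).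

(* K (of characteristic 0) has transcendence degree >= n over Q iff it contains
   n elements algebraically independent over Q (Q embedded via ratr). *)
Definition alg_indep_Q (K : fieldType) n (x : 'I_n -> K) : Prop :=
  forall p : {mpoly rat[n]}, mmap (@ratr K) x p = 0 -> p = 0.

Definition trdeg_Q_ge (K : fieldType) (n : nat) : Prop :=
  exists x : 'I_n -> K, alg_indep_Q x.

(* Send x_i to [[t_i, 0], [t_i^2, t_i^-1]] in ST(K), with t_1, ..., t_n
   algebraically independent over Q. Reading a word w as a walk from 0 in the
   Cayley graph of Z^n, its image is [[t^e, 0], [t^e S, t^-e]], where e is the
   endpoint of the walk and S is the sum over the edges crossed of
   +- t^(e_i - 2v) for the edge (v, v + e_i), the sign recording the direction.
   As ST(K)' is unipotent, hence abelian, F^(2) lies in the kernel. Conversely,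
   if w is in the kernel then algebraic independence forces e = 0 and makes
   every edge crossed equally often in both directions. Then w is freely equal
   to a product of the loops p_v x_i p_(v+e_i)^-1 of F' in which each loop
   occurs as often as its inverse, and such a product lies in [F', F']. *)

From HB Require Import structures.
From mathcomp Require Import all_boot all_order all_algebra.
From mathcomp Require Import mpoly.
From mathcomp Require Import zify ring.
Set Implicit Arguments. Unset Strict Implicit. Unset Printing Implicit Defensive.
Import GRing.Theory.
Local Open Scope ring_scope.

Section FreeWords.
Variable n : nat.
Implicit Types (u v w x y : word n) (a : letter n).

Lemma flip_letterK : involutive (@flip_letter n).
Proof. by case=> i b; rewrite /flip_letter /= negbK. Qed.

Lemma winvK : involutive (@winv n).
Proof. by move=> w; rewrite /winv map_rev revK (mapK flip_letterK). Qed.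

Lemma winv_cat u v : winv (u ++ v) = winv v ++ winv u.
Proof. by rewrite /winv map_cat rev_cat. Qed.

Lemma winv_cons a u : winv (a :: u) = winv u ++ [:: flip_letter a].
Proof. by rewrite /winv map_cons rev_cons cats1. Qed.

Lemma freeq_congr u v x y : freeq x y -> freeq (u ++ x ++ v) (u ++ y ++ v).
Proof.
elim=> [w|w w' _|w1 w2 w3 _ IH1 _ IH2|u' v' a].
- exact: freeq_refl.
- exact: freeq_sym.
- exact: freeq_trans IH2.
- by have := freeq_cancel (u ++ u') (v' ++ v) a; rewrite -!catA.
Qed.

Lemma freeq_catl u x y : freeq x y -> freeq (u ++ x) (u ++ y).
Proof. by move=> /(freeq_congr u [::]); rewrite !cats0. Qed.

Lemma freeq_winvl u : freeq (winv u ++ u) [::].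
Proof.
elim: u => [|a u IH] /=; first exact: freeq_refl.
rewrite winv_cons -catA /=; apply: freeq_trans IH.
by have := freeq_cancel (winv u) u (flip_letter a); rewrite flip_letterK.
Qed.

Lemma freeq_winvr u : freeq (u ++ winv u) [::].
Proof. by have := freeq_winvl (winv u); rewrite winvK. Qed.

Lemma freeq_cancel_winv x y u : freeq (x ++ winv u ++ u ++ y) (x ++ y).
Proof. by have := freeq_congr x y (freeq_winvl u); rewrite -!catA. Qed.

End FreeWords.

Section BalancedProducts.
Variable n : nat.
Variable H : word n -> Prop.
Hypothesis H_nil : H [::].
Hypothesis H_cat : forall u v, H u -> H v -> H (u ++ v).
Hypothesis H_winv : forall u, H u -> H (winv u).
Variables (T : eqType) (beta : T -> word n).
Hypothesis H_beta : forall t, H (beta t).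

(* [(t, true)] stands for the inverse of [beta t]. *)
Definition signed_word (k : T * bool) : word n :=
  if k.2 then winv (beta k.1) else beta k.1.

Lemma H_signed_word k : H (signed_word k).
Proof. by rewrite /signed_word; case: ifP => _; [apply: H_winv|]; apply: H_beta. Qed.

Lemma H_signed_prod s : H (flatten (map signed_word s)).
Proof. by elim: s => //= k s IH; apply: H_cat => //; apply: H_signed_word. Qed.

(* Cancel one occurrence of [beta t] against one of its inverse: what separates
   them is a commutator of elements of [H]. *)
Lemma derived_sub_balanced s :
  (forall t, count_mem (t, false) s = count_mem (t, true) s) ->
  derived_sub H (flatten (map signed_word s)).
Proof.
move: {2}(size s) (leqnn (size s)) => m; elim: m s => [|m IH] [|[t b] s] //=;
  try by move=> *; apply: gen_sub_nil.
move=> size_s bal_s.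
have [s1 [s2 def_s]] : exists s1 s2, s = s1 ++ (t, ~~ b) :: s2.
  have : (t, ~~ b) \in s.
    have := bal_s t; rewrite -has_pred1 has_count !eqE /= eqxx.
    by case: b {bal_s}; rewrite /= ?andbT ?andbF /=; lia.
  by case/splitPr => s1 s2; exists s1, s2.
rewrite {}def_s in size_s bal_s *.
have bal_s12 t' : count_mem (t', false) (s1 ++ s2) = count_mem (t', true) (s1 ++ s2).
  have := bal_s t'; rewrite !count_cat /= !xpair_eqE.
  case: (eqVneq t t') => [<-|ne]; rewrite ?eqxx ?(negbTE ne) /=;
    by case: b {bal_s size_s}; lia.
have /(IH _)/(_ bal_s12) : (size (s1 ++ s2) <= m)%N.
  by move: size_s; rewrite !size_cat /=; lia.
rewrite !map_cat !flatten_cat /= => D12.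
have -> : signed_word (t, ~~ b) = winv (signed_word (t, b)).
  by case: b {bal_s size_s}; rewrite /signed_word /= ?winvK.
set B := signed_word (t, b); set P1 := flatten (map signed_word s1).
have D : derived_sub H (wcomm (winv B) (winv P1)).
  by apply: gen_sub_base; exists (winv B), (winv P1); split => //;
    apply: H_winv; [apply: H_signed_word | apply: H_signed_prod].
apply: gen_sub_freeq (gen_sub_cat D D12).
rewrite /wcomm !winvK.
by have := freeq_cancel_winv (B ++ P1 ++ winv B) (flatten (map signed_word s2)) P1;
  rewrite -!catA.
Qed.

End BalancedProducts.

Section LatticeWalks.
Variable n : nat.
Implicit Types (u w : word n) (v : {ffun 'I_n -> int}).

Definition basis_vec (i : 'I_n) : {ffun 'I_n -> int} := [ffun j => ((i == j) : nat)%:Z].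

Definition walk_step v (a : letter n) :=
  if a.2 then v - basis_vec a.1 else v + basis_vec a.1.

Definition gen_pow (i : 'I_n) (z : int) : word n :=
  match z with Posz k => nseq k (i, false) | Negz k => nseq k.+1 (i, true) end.

(* x_1^(v 1) ... x_n^(v n): the standard representative of the vertex [v] of
   the Cayley graph of Z^n. *)
Definition vertex_word v : word n := flatten [seq gen_pow i (v i) | i <- enum 'I_n].

(* The loop of F closing the edge from [v] to [v + e_i]. *)
Definition edge_word (e : {ffun 'I_n -> int} * 'I_n) : word n :=
  vertex_word e.1 ++ (e.2, false) :: winv (vertex_word (e.1 + basis_vec e.2)).

(* An edge is named by its lower end [v] and direction [i]; [true] marks a
   backward crossing. *)
Fixpoint walk_edges w v : seq (({ffun 'I_n -> int} * 'I_n) * bool) :=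
  if w is a :: w' then
    (if a.2 then ((v - basis_vec a.1, a.1), true) else ((v, a.1), false))
      :: walk_edges w' (walk_step v a)
  else [::].

Lemma walk_edges_telescope w v :
  freeq (flatten (map (signed_word edge_word) (walk_edges w v)))
        (vertex_word v ++ w ++ winv (vertex_word (foldl walk_step v w))).
Proof.
elim: w v => [|[i b] w IH] v /=; first by apply: freeq_sym; apply: freeq_winvr.
have -> : signed_word edge_word
    (if b then ((v - basis_vec i, i), true) else ((v, i), false)) =
    vertex_word v ++ (i, b) :: winv (vertex_word (walk_step v (i, b))).
  rewrite /signed_word /edge_word /walk_step; case: b => //=.
  by rewrite winv_cat winv_cons winvK /= subrK -catA.
apply: freeq_trans (freeq_catl _ (IH _)) _.
by have := freeq_cancel_winv (vertex_word v ++ [:: (i, b)])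
  (w ++ winv (vertex_word (foldl walk_step (walk_step v (i, b)) w)))
  (vertex_word (walk_step v (i, b))); rewrite -!catA.
Qed.

Lemma vertex_word0 : vertex_word 0 = [::].
Proof. by rewrite /vertex_word; elim: (enum 'I_n) => //= i s; rewrite ffunE. Qed.

Definition posn (z : int) : nat := if z is Posz k then k else 0.
Definition negn (z : int) : nat := if z is Negz k then k.+1 else 0.

Lemma count_gen_pow j b i z :
  count_mem (j, b) (gen_pow i z) = if i == j then (if b then negn z else posn z) else 0%N.
Proof.
by case: z => k /=; rewrite count_nseq /= xpair_eqE; case: (i == j); case: b => /=; lia.
Qed.

Lemma count_vertex_word j b v :
  count_mem (j, b) (vertex_word v) = if b then negn (v j) else posn (v j).
Proof.
rewrite /vertex_word count_flatten -map_comp sumnE big_map big_enum /=.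
rewrite (bigD1 j) //= count_gen_pow eqxx big1 ?addn0 // => i /negbTE ij.
by rewrite /= count_gen_pow ij.
Qed.

Lemma count_winv j b w : count_mem (j, b) (winv w) = count_mem (j, ~~ b) w.
Proof.
rewrite /winv count_rev count_map; apply: eq_count => -[k c] /=.
by rewrite /flip_letter /= !xpair_eqE; case: b; case: c.
Qed.

Lemma F1_balanced w :
  (forall j, count_mem (j, false) w = count_mem (j, true) w) -> F1 w.
Proof.
move=> bal_w; have -> : w = flatten (map (signed_word (fun i => [:: (i, false)])) w).
  by elim: w {bal_w} => //= -[i [|]] w <-.
exact: derived_sub_balanced.
Qed.

Lemma edge_word_F1 e : F1 (edge_word e).
Proof.
apply: F1_balanced => j; case: e => v i.
rewrite /edge_word /= !count_cat /= !count_winv !count_vertex_word /= !xpair_eqE /=.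
rewrite !andbT andbF add0n !ffunE; case: (i =P j) => _ /=; last by rewrite addr0; lia.
by case: (v j) => [k|[|k]] /=; lia.
Qed.

Lemma F2_balanced_closed_walk w :
  foldl walk_step 0 w = 0 ->
  (forall e, count_mem (e, false) (walk_edges w 0) = count_mem (e, true) (walk_edges w 0)) ->
  F2 w.
Proof.
move=> closed_w bal_w.
have D : F2 (flatten (map (signed_word edge_word) (walk_edges w 0))).
  apply: derived_sub_balanced bal_w.
  - exact: gen_sub_nil.
  - by move=> ? ? ? ?; apply: gen_sub_cat.
  - by move=> ? ?; apply: gen_sub_inv.
  - exact: edge_word_F1.
apply: gen_sub_freeq D; have := walk_edges_telescope w 0.
by rewrite closed_w vertex_word0 /winv /= cats0.
Qed.

(* Weights of the edges in the image of a walk; choosing [t_i ^+ 2] as the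
   lower-left entry of the i-th generator makes distinct edges get distinct
   weights. *)
Definition edge_exponent (e : {ffun 'I_n -> int} * 'I_n) := basis_vec e.2 - e.1 *+ 2.

Lemma edge_exponent_inj : injective edge_exponent.
Proof.
move=> [u i] [v j] E.
have Ei := congr1 (fun f : {ffun 'I_n -> int} => f i) E.
have {Ei}ij : i = j.
  move: Ei; rewrite /edge_exponent /= !ffunE eqxx /=.
  by case: (eqVneq j i) => // _; case: (u i) (v i) => ? ?; lia.
subst j; congr (_, _); apply/ffunP => k.
have := congr1 (fun f : {ffun 'I_n -> int} => f k) E; rewrite /edge_exponent /= !ffunE.
by case: (u k) (v k) => ? ?; lia.
Qed.

End LatticeWalks.
Arguments basis_vec {n}.
Arguments walk_step {n}.
Arguments walk_edges {n}.
Arguments edge_exponent {n}.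
Arguments edge_exponent_inj {n}.

Section RatrPchar0.
Variable K : fieldType.
Hypothesis K_pchar0 : [pchar K] =i pred0.

Lemma intr_pchar0_eq0 (z : int) : (z%:~R == 0 :> K) = (z == 0).
Proof.
have natr_eq0 k : (k%:R == 0 :> K) = (k == 0)%N by apply: (pcharf0P K).1.
by case: z => k; rewrite ?NegzE ?mulrNz ?oppr_eq0 -?pmulrn natr_eq0.
Qed.

Lemma ratr_frac (a b : int) : b != 0 -> ratr (a%:~R / b%:~R) = a%:~R / b%:~R :> K.
Proof.
move=> b_neq0; set x : rat := _ / _.
have cross : numq x * b = a * denq x.
  apply: (@intr_inj rat); rewrite !rmorphM /= numqE {1}/x -mulrA mulrCA divfK 1?mulrC //.
  by rewrite intr_eq0.
apply/eqP; rewrite eqr_div ?intr_pchar0_eq0 ?denq_neq0 //.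
by rewrite -!rmorphM /= cross mulrC.
Qed.

Lemma ratr_is_zmod_morphism_pchar0 : zmod_morphism (@ratr K).
Proof.
move=> x y; rewrite -[x]divq_num_den -[y]divq_num_den.
have [dx dy] := (denq_neq0 x, denq_neq0 y).
have -> : (numq x)%:Q / (denq x)%:Q - (numq y)%:Q / (denq y)%:Q =
    (numq x * denq y - numq y * denq x)%:~R / (denq x * denq y)%:~R.
  rewrite rmorphB !rmorphM /=; field; by rewrite !intr_eq0 dx dy.
rewrite !ratr_frac ?mulf_neq0 // rmorphB !rmorphM /=.
by field; rewrite !intr_pchar0_eq0 dx dy.
Qed.

Definition ratr_pchar0 : {additive rat -> K} :=
  HB.pack (@ratr K) (GRing.isZmodMorphism.Build _ _ _ ratr_is_zmod_morphism_pchar0).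

End RatrPchar0.

Section LaurentMonomials.
Variables (K : fieldType) (n : nat) (t : 'I_n -> K).
Hypothesis t_neq0 : forall i, t i != 0.
Implicit Types u v : {ffun 'I_n -> int}.

Definition laurent u : K := \prod_i t i ^ u i.

Lemma laurent_neq0 u : laurent u != 0.
Proof. by apply/prodf_neq0 => i _; rewrite expfz_neq0. Qed.

Lemma laurent0 : laurent 0 = 1.
Proof. by rewrite /laurent big1 // => i _; rewrite ffunE expr0z. Qed.

Lemma laurentD u v : laurent (u + v) = laurent u * laurent v.
Proof.
by rewrite /laurent -big_split; apply: eq_bigr => i _; rewrite ffunE expfzDr.
Qed.

Lemma laurentN u : laurent (- u) = (laurent u)^-1.
Proof. by rewrite /laurent -prodfV; apply: eq_bigr => i _; rewrite ffunE invr_expz. Qed.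

Lemma laurentMn u k : laurent (u *+ k) = laurent u ^+ k.
Proof. by elim: k => [|k IH]; rewrite ?mulr0n ?laurent0 // mulrS laurentD IH exprS. Qed.

Lemma laurent_basis i : laurent (basis_vec i) = t i.
Proof.
rewrite /laurent (bigD1 i) //= ffunE eqxx expr1z big1 ?mulr1 // => j /negbTE ji.
by rewrite ffunE eq_sym ji expr0z.
Qed.

(* Multiplying by (t_1 ... t_n)^N turns a Laurent monomial with exponents in
   [-N, N] into an ordinary monomial. *)
Definition shift_mnm (N : nat) u : 'X_{1..n} := [multinom absz (u i + N%:Z)%R | i < n].

Lemma mmap1_shift_mnm N u : (forall i, absz (u i) <= N)%N ->
  mmap1 t (shift_mnm N u) = laurent u * \prod_i t i ^+ N.
Proof.
move=> u_le_N; rewrite /mmap1 /laurent -big_split /=; apply: eq_bigr => i _.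
rewrite mnmE exprnP [t i ^+ N]exprnP -expfzDr //; congr (_ ^ _).
by have := u_le_N i; case: (u i) => k /=; lia.
Qed.

Lemma shift_mnm_inj N u v : (forall i, absz (u i) <= N)%N ->
  (forall i, absz (v i) <= N)%N -> shift_mnm N u = shift_mnm N v -> u = v.
Proof.
move=> u_le_N v_le_N E; apply/ffunP => i.
have := congr1 (fun m : 'X_{1..n} => m i) E; rewrite /shift_mnm !mnmE.
by have := u_le_N i; have := v_le_N i; case: (u i) (v i) => [a|a] [b|b] /=; lia.
Qed.

End LaurentMonomials.

Section AlgebraicIndependence.
Variables (K : fieldType) (n : nat) (t : 'I_n -> K).
Hypothesis K_pchar0 : [pchar K] =i pred0.
Hypothesis t_indep : alg_indep_Q t.

Lemma mmap_ratrX (m : 'X_{1..n}) : mmap (@ratr K) t 'X_[m] = mmap1 t m.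
Proof. by rewrite /mmap msuppX big_seq1 mcoeffX eqxx /ratr divr1 mul1r. Qed.

Lemma alg_indep_neq0 i : t i != 0.
Proof.
apply/negP => /eqP ti0.
have : ('X_i : {mpoly rat[n]}) = 0 by apply: t_indep; rewrite mmap_ratrX mmap1U.
by move/(congr1 (mcoeff U_(i))); rewrite mcoeffX eqxx raddf0 => /eqP; rewrite oner_eq0.
Qed.

Local Notation laurent := (laurent t).

Lemma laurent_indep (I : eqType) (s : seq I) (c : I -> int)
    (u : I -> {ffun 'I_n -> int}) u0 :
  \sum_(k <- s) (c k)%:~R * laurent (u k) = 0 -> \sum_(k <- s | u k == u0) c k = 0.
Proof.
move=> sum0; pose N := (\max_(v <- u0 :: map u s) \max_i absz (v i))%N.
have le_N v : v \in u0 :: map u s -> forall i, (absz (v i) <= N)%N.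
  move=> sv i; apply: leq_trans (@leq_bigmax _ (fun i => absz (v i)) i) _.
  exact: (@leq_bigmax_seq _ (u0 :: map u s) xpredT (fun v => \max_i absz (v i))%N v sv isT).
have le_Nu k : k \in s -> forall i, (absz (u k i) <= N)%N.
  by move=> sk; apply: le_N; rewrite inE map_f ?orbT.
have le_N0 : forall i, (absz (u0 i) <= N)%N by apply: le_N; rewrite inE eqxx.
pose p : {mpoly rat[n]} := \sum_(k <- s) 'X_[shift_mnm N (u k)] *~ c k.
have p0 : p = 0.
  apply: t_indep; rewrite (raddf_sum (mmap (ratr_pchar0 K_pchar0) t)).
  rewrite (eq_big_seq (fun k => \prod_i t i ^+ N * ((c k)%:~R * laurent (u k)))).
    by rewrite -mulr_sumr sum0 mulr0.
  move=> k sk; rewrite (raddfMz (mmap (ratr_pchar0 K_pchar0) t)) /=.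
  rewrite mmap_ratrX mmap1_shift_mnm; last exact: le_Nu; last exact: alg_indep_neq0.
  by rewrite -mulrzr; ring.
have := congr1 (mcoeff (shift_mnm N u0)) p0; rewrite raddf0 raddf_sum /=.
rewrite (eq_big_seq (fun k => (if u k == u0 then c k else 0)%:~R)); last first.
  move=> k sk; rewrite raddfMz /= mcoeffX.
  case: (eqVneq (u k) u0) => [->|neq]; first by rewrite eqxx /= mulr1n.
  suff /negbTE-> : shift_mnm N (u k) != shift_mnm N u0 by rewrite mul0rz.
  by apply: contra neq => /eqP/(shift_mnm_inj (le_Nu k sk) le_N0)->.
by rewrite -rmorph_sum -big_mkcond /= => /eqP; rewrite intr_eq0 => /eqP.
Qed.

Lemma laurent_eq1 u : laurent u = 1 -> u = 0.
Proof.
move=> u1; apply/eqP; apply: contraT => u_neq0.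
have := @laurent_indep _ [:: u; 0] (fun v => if v == 0 then -1 else 1) id u.
rewrite !big_cons big_nil u1 laurent0 eqxx (negbTE u_neq0) eq_sym (negbTE u_neq0).
by rewrite eqxx big_nil !mulr1 addr0 -intrD subrr => /(_ erefl).
Qed.

End AlgebraicIndependence.

Section STMatrices.
Variable K : fieldType.
Implicit Types a b c d : K.

Definition st_mx a b : 'M[K]_2 :=
  \matrix_(i < 2, j < 2)
     (if (i == 0) && (j == 0) then a
      else if i == 0 then 0
      else if j == 0 then b else a^-1).

Lemma st_mxM a b c d : st_mx a b * st_mx c d = st_mx (a * c) (b * c + a^-1 * d).
Proof.
rewrite -mulmxE; apply/matrixP => i j; rewrite !mxE !big_ord_recl big_ord0 !mxE.
by case: i => [[|[|//]] ?]; case: j => [[|[|//]] ?] /=; rewrite ?invfM; ring.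
Qed.

Lemma st_mx1 : st_mx 1 0 = 1.
Proof.
apply/matrixP => i j; rewrite !mxE.
by case: i => [[|[|//]] ?]; case: j => [[|[|//]] ?] /=; rewrite ?invr1.
Qed.

Lemma st_mx_inj a b c d : st_mx a b = st_mx c d -> a = c /\ b = d.
Proof.
move=> E; have := congr1 (fun M : 'M[K]_2 => M 0 0) E.
by have := congr1 (fun M : 'M[K]_2 => M 1 0) E; rewrite !mxE.
Qed.

Lemma st_mx_unit a b : a != 0 -> st_mx a b \is a GRing.unit.
Proof.
move=> a_neq0; apply/unitrP; exists (st_mx a^-1 (- b)).
by rewrite !st_mxM -st_mx1; split; congr st_mx; rewrite ?invrK; field.
Qed.

Lemma st_mxV a b : a != 0 -> (st_mx a b)^-1 = st_mx a^-1 (- b).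
Proof.
move=> a_neq0; apply: (mulrI (st_mx_unit b a_neq0)).
by rewrite divrr ?st_mx_unit // st_mxM -st_mx1; congr st_mx; field.
Qed.

Definition st_unipotent (M : 'M[K]_2) := exists e, M = st_mx 1 e.

Lemma st_unipotent1 : st_unipotent 1.
Proof. by exists 0; rewrite st_mx1. Qed.

Lemma st_unipotentM M N : st_unipotent M -> st_unipotent N -> st_unipotent (M * N).
Proof. by move=> [e ->] [f ->]; rewrite st_mxM mulr1; eexists. Qed.

Lemma st_unipotentV M : st_unipotent M -> st_unipotent M^-1.
Proof. by move=> [e ->]; rewrite st_mxV ?oner_neq0 // invr1; eexists. Qed.

Definition mx_commutator (M N : 'M[K]_2) := M^-1 * (N^-1 * (M * N)).

(* ST(K)' is unipotent, and unipotent elements commute: ST(K)'' = 1. *)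
Lemma st_mx_commutator a b c d : a != 0 -> c != 0 ->
  st_unipotent (mx_commutator (st_mx a b) (st_mx c d)).
Proof.
move=> a_neq0 c_neq0; rewrite /mx_commutator !st_mxV // !st_mxM; eexists; congr st_mx.
by field; rewrite c_neq0 a_neq0.
Qed.

Lemma st_unipotent_commutator M N :
  st_unipotent M -> st_unipotent N -> mx_commutator M N = 1.
Proof.
move=> [e ->] [f ->]; rewrite /mx_commutator !st_mxV ?oner_neq0 // !st_mxM -st_mx1 !invr1.
by congr st_mx; ring.
Qed.

End STMatrices.

Section WordEvaluation.
Variables (K : fieldType) (n : nat) (g : 'I_n -> 'M[K]_2).
Hypothesis g_unit : forall i, g i \is a GRing.unit.
Implicit Types u v w : word n.

Lemma weval_cat u v : weval g (u ++ v) = weval g u * weval g v.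
Proof. by elim: u => [|a u IH] /=; rewrite ?mul1r // IH mulrA. Qed.

Lemma weval_unit w : weval g w \is a GRing.unit.
Proof.
elim: w => [|[i b] w IH] /=; first exact: unitr1.
by rewrite unitrMr //; case: b; rewrite ?unitrV g_unit.
Qed.

Lemma weval_freeq u v : freeq u v -> weval g u = weval g v.
Proof.
elim=> [//|w w' _ ->//|w1 w2 w3 _ -> _ ->//|u' v' [i b]].
rewrite !weval_cat /= /flip_letter /= mulr1 mulrA.
by case: b; rewrite ?divrr ?mulVr ?g_unit ?mulr1.
Qed.

Lemma weval_winv w : weval g (winv w) = (weval g w)^-1.
Proof.
have := weval_freeq (freeq_winvl w); rewrite weval_cat /= => inv_l.
by rewrite -[RHS]mul1r -inv_l mulrK ?weval_unit.
Qed.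

Lemma weval_wcomm u v : weval g (wcomm u v) = mx_commutator (weval g u) (weval g v).
Proof. by rewrite /wcomm !weval_cat !weval_winv. Qed.

End WordEvaluation.

Section WalkRepresentation.
Variables (K : fieldType) (n : nat) (t : 'I_n -> K).
Hypothesis t_neq0 : forall i, t i != 0.
Implicit Types (w : word n) (v : {ffun 'I_n -> int}).
Local Notation laurent := (laurent t).

Definition st_gen i := st_mx (t i) (t i ^+ 2).

Lemma st_gen_unit i : st_gen i \is a GRing.unit.
Proof. exact: st_mx_unit. Qed.

Definition walk_sum w v : K :=
  \sum_(k <- walk_edges w v) (if k.2 then -1 else 1) * laurent (edge_exponent k.1).

Lemma laurent_walk_step v (a : letter n) :
  laurent (walk_step v a) = laurent v * (if a.2 then (t a.1)^-1 else t a.1).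
Proof.
by rewrite /walk_step; case: a.2; rewrite (laurentD t_neq0) ?(laurentN t) laurent_basis.
Qed.

Lemma weval_st_gen w v :
  weval st_gen w = st_mx (laurent (foldl walk_step v w) / laurent v)
                         (laurent v * laurent (foldl walk_step v w) * walk_sum w v).
Proof.
have lv_neq0 := laurent_neq0 t_neq0.
elim: w v => [|[i b] w IH] v /=.
  by rewrite divff // /walk_sum big_nil mulr0 st_mx1.
rewrite (IH (walk_step v (i, b))) /walk_sum big_cons -/(walk_sum _ _).
rewrite laurent_walk_step /edge_exponent /=.
have ti_neq0 := t_neq0 i.
by case: b; rewrite /= ?st_mxV // st_mxM !(laurentMn t_neq0, laurentD t_neq0, laurentN t)
  laurent_basis; congr st_mx; field; rewrite ?lv_neq0 ?ti_neq0 ?oner_neq0.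
Qed.

Lemma weval_st_gen_F1 w : F1 w -> st_unipotent (weval st_gen w).
Proof.
elim=> [_ [u [v [_ _ ->]]] | | u v _ Uu _ Uv | u _ Uu | u v f _ Uu].
- rewrite (weval_wcomm st_gen_unit) !(weval_st_gen _ 0).
  by apply: st_mx_commutator; rewrite mulf_neq0 ?invr_neq0 ?laurent_neq0.
- exact: st_unipotent1.
- by rewrite weval_cat; apply: st_unipotentM.
- by rewrite (weval_winv st_gen_unit); apply: st_unipotentV.
- by rewrite -(weval_freeq st_gen_unit f).
Qed.

Lemma weval_st_gen_F2 w : F2 w -> weval st_gen w = 1.
Proof.
elim=> [_ [u [v [F1u F1v ->]]] | | u v _ E1 _ E2 | u _ E | u v f _ E].
- rewrite (weval_wcomm st_gen_unit).
  by apply: st_unipotent_commutator; apply: weval_st_gen_F1.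
- by [].
- by rewrite weval_cat E1 E2 mulr1.
- by rewrite (weval_winv st_gen_unit) E invr1.
- by rewrite -(weval_freeq st_gen_unit f).
Qed.

End WalkRepresentation.

Lemma sum_signs (T : eqType) (s : seq (T * bool)) x :
  \sum_(k <- s | k.1 == x) (if k.2 then -1 else 1 : int) =
  (count_mem (x, false) s)%:Z - (count_mem (x, true) s)%:Z.
Proof.
elim: s => [|[y b] s IH]; first by rewrite big_nil.
by rewrite big_cons /= IH !xpair_eqE; case: (y == x); case: b => /=; lia.
Qed.

Section Faithfulness.
Variables (K : fieldType) (n : nat) (t : 'I_n -> K).
Hypothesis K_pchar0 : [pchar K] =i pred0.
Hypothesis t_indep : alg_indep_Q t.

Lemma walk_sum_eq0 w v : walk_sum t w v = 0 ->
  forall e, count_mem (e, false) (walk_edges w v) = count_mem (e, true) (walk_edges w v).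
Proof.
move=> sum0 e; apply/eqP; rewrite -eqz_nat -subr_eq0 -sum_signs; apply/eqP.
under eq_bigl => k do rewrite -(inj_eq edge_exponent_inj).
apply: (laurent_indep K_pchar0 t_indep); rewrite -[RHS]sum0.
by apply: eq_bigr => k _; case: k.2.
Qed.

End Faithfulness.

Theorem corollary3p4 (n : nat) (K : fieldType) :
  (2 <= n)%N ->
  [pchar K] =i pred0 ->
  trdeg_Q_ge K n ->
  exists g : 'I_n -> 'M[K]_2,
    (forall i, in_ST (g i)) /\
    (forall w : word n, weval g w = 1 <-> F2 w).
Proof.
move=> _ K_pchar0 [t t_indep]; have t_neq0 := alg_indep_neq0 t_indep.
exists (st_gen t); split=> [i | w]; first by exists (t i), (t i ^+ 2).
split=> [|/(weval_st_gen_F2 t_neq0)//].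
rewrite (weval_st_gen t_neq0 w 0) (laurent0 t) divr1 mul1r -st_mx1.
move=> /st_mx_inj [/(laurent_eq1 K_pchar0 t_indep) closed_w].
rewrite closed_w (laurent0 t) mul1r => /(walk_sum_eq0 K_pchar0 t_indep).
exact: F2_balanced_closed_walk.
Qed.
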